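(* Assume hypotheses (A) and (B) and that $\min_{1\le i\le d}\frac{1}{G_{ii}}(\sqrt{\mu_i}-\sqrt{\nu_i})^2=\frac{1}{G_{11}}(\sqrt{\mu_1}-\sqrt{\nu_1})^2$. Let $\alpha\in\mathcal{B}_{\{1\}}$ with $\{2,\dots,d\}\setminus J(\alpha)\ne\emptyset$. Then for every $i\in\{2,\dots,d\}\setminus J(\alpha)$ there exists $\tilde\alpha\in\mathcal{B}_{\{1\}}$ such that $J(\alpha)\cup\{i\}\subset J(\tilde\alpha)$ and $$R(\tilde\alpha)<\max\Bigl\{R(\alpha),\ -\frac{1}{G_{ii}}\bigl(\sqrt{\mu_i}-\sqrt{\nu_i}\bigr)^2\Bigr\}.$$
   Context: Jackson network with $d$ queues: arrival rates $\lambda_i\ge0$, service rates $\mu_i>0$, routing matrix $P=(p_{ij})_{i,j=1}^d$ nonnegative with $p_{ii}=0$, $\sum_jp_{ij}\le1$, $p_{i0}=1-\sum_jp_{ij}$. Hypothesis (A): the jump-rate kernel on $\mathbb{Z}^d$ (jumps $+\epsilon^i$ at rate $\lambda_i$, $-\epsilon^i$ at rate $\mu_ip_{i0}$, $\epsilon^j-\epsilon^i$ at rate $\mu_ip_{ij}$) is irreducible (equivalently spectral radius of $P$ $<1$ and for every $i$ some $\lambda_jp^{(n)}_{ji}>0$); then the traffic equations $\nu_j=\lambda_j+\sum_i\nu_ip_{ij}$ have a unique solution with $\nu_i>0$. Hypothesis (B): $\nu_i<\mu_i$ for all $i$. $G=(I-P)^{-1}$. For $\alpha\in\mathbb{R}^d$,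 $$R(\alpha)=\sum_{i=1}^d\mu_i\Bigl(\sum_{j=1}^dp_{ij}e^{\alpha^j-\alpha^i}+p_{i0}e^{-\alpha^i}-1\Bigr)+\sum_{i=1}^d\lambda_i(e^{\alpha^i}-1).$$ $\mathcal{B}_{\{1\}}$ is the set of $\alpha\in\mathbb{R}^d$ with $e^{\alpha^k}\le\sum_{j=1}^dp_{kj}e^{\alpha^j}+p_{k0}$ for all $k\ne1$. $J(\alpha)$ is the set of $k\in\{1,\dots,d\}$ with $e^{\alpha^k}=\sum_{j=1}^dp_{kj}e^{\alpha^j}+p_{k0}$. *)

From HB Require Import structures.
From mathcomp Require Import all_boot all_order all_algebra.
From mathcomp Require Import reals.
From mathcomp Require Import sequences exp.
Set Implicit Arguments. Unset Strict Implicit. Unset Printing Implicit Defensive.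
Import Order.TTheory GRing.Theory Num.Theory.
Local Open Scope ring_scope.

Section Jackson.
Variables (R : realType) (d : nat).
Implicit Types (lam mu nu a : 'I_d -> R) (P : 'M[R]_d).

Definition p0 P (i : 'I_d) : R := 1 - \sum_j P i j.

Definition Gmx P : 'M[R]_d := invmx (1%:M - P).

Definition unitv (i : 'I_d) : 'rV[int]_d := delta_mx 0 i.

Definition is_jump lam mu P (v : 'rV[int]_d) : Prop :=
  (exists i, v = unitv i /\ 0 < lam i) \/
  (exists i, v = - unitv i /\ 0 < mu i * p0 P i) \/
  (exists i j, v = unitv j - unitv i /\ 0 < mu i * P i j).

(* Hypothesis (A): the jump kernel on Z^d is irreducible: any y is reachable
   from any x by a finite path of positive-rate jumps. *)
Definition jackson_irreducible lam mu P : Prop :=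
  forall x y : 'rV[int]_d, exists s : seq 'rV[int]_d,
    (forall v, v \in s -> is_jump lam mu P v) /\ y = x + \sum_(v <- s) v.

Definition Rfun lam mu P a : R :=
  \sum_i mu i * (\sum_j P i j * expR (a j - a i) + p0 P i * expR (- a i) - 1)
  + \sum_i lam i * (expR (a i) - 1).

Definition Bset P (k1 : 'I_d) a : Prop :=
  forall k, k != k1 -> expR (a k) <= \sum_j P k j * expR (a j) + p0 P k.

Definition Jset P a (k : 'I_d) : Prop :=
  expR (a k) = \sum_j P k j * expR (a j) + p0 P k.

Definition gap mu nu P (i : 'I_d) : R :=
  (Num.sqrt (mu i) - Num.sqrt (nu i)) ^+ 2 / Gmx P i i.

End Jackson.

(* Split [R(a) = Lagr c a + \sum_k (mu_k - c_k) Bdefect a k], where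
   [Bdefect a k = e^{-a_k} (\sum_j p_kj e^{a_j} + p_k0) - 1] is nonnegative
   on [B_{1}] off queue 1 and vanishes exactly on [J(a)], and [Lagr c] is [R]
   with weights [c] in place of [mu].  When [c = x y] for a balanced pair
   [(x, y)], [Lagr c] is minimised at [ln x]: after the substitution
   [a = ln x + delta] it becomes a sum of exponential costs on a flow network
   in which every node is balanced, so its linearization at [delta = 0] is
   constant.
   The pairs [x_t = 1 + t G_{.1}], [y_t = nu + t nu_1 G_{1.}] are balanced for
   every [t], and [x_t] is harmonic off queue 1, so [J(ln x_t)] contains every
   queue but the first.  The minimum principle for [P], a consequence of
   irreducibility, yields [G_k1 nu_k <= G_kk nu_1] and
   [G_11 <= G_11 G_kk - G_k1 G_1k]; with the minimality of the gap of queue 1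
   these give [x_k y_k < mu_k] for [k <> 1] as long as
   [t <= tmax = (sqrt mu_1 - sqrt nu_1) / (sqrt nu_1 G_11)], while
   [x_1 y_1 = mu_1] at [t = tmax].  Hence
   [R(ln x_tmax) = Lagr c (ln x_tmax) <= Lagr c a < R(a)].  If [1 \in J(a)],
   [t = 0] (that is, [a~ = 0]) works instead. *)

From HB Require Import structures.
From mathcomp Require Import all_boot all_order all_algebra.
From mathcomp Require Import boolp reals.
From mathcomp Require Import sequences exp.
From mathcomp Require Import ring lra.
Set Implicit Arguments. Unset Strict Implicit. Unset Printing Implicit Defensive.
Import Order.TTheory GRing.Theory Num.Theory.
Local Open Scope ring_scope.

Section JumpWeight.
Variables (R : realType) (d : nat).

Definition jump_weight (psi : 'I_d -> R) (v : 'rV[int]_d) : R :=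
  \sum_j psi j * (v 0 j)%:~R.

Lemma jump_weightD psi v w :
  jump_weight psi (v + w) = jump_weight psi v + jump_weight psi w.
Proof.
by rewrite -big_split; apply: eq_bigr => j _; rewrite mxE intrD mulrDr.
Qed.

Lemma jump_weight0 psi : jump_weight psi 0 = 0.
Proof. by rewrite /jump_weight big1 // => j _; rewrite mxE mulr0. Qed.

Lemma jump_weightN psi v : jump_weight psi (- v) = - jump_weight psi v.
Proof. by rewrite -sumrN; apply: eq_bigr => j _; rewrite mxE intrN mulrN. Qed.

Lemma jump_weight_unitv psi k : jump_weight psi (unitv k) = psi k.
Proof.
rewrite /jump_weight (bigD1 k) //= big1 => [|j jk].
  by rewrite !mxE !eqxx mulr1 addr0.
by rewrite !mxE eqxx (negbTE jk) mulr0.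
Qed.

End JumpWeight.

Section IrreducibleKernel.
Variables (R : realType) (d : nat) (lam mu : 'I_d -> R) (P : 'M[R]_d).
Hypotheses (hA : jackson_irreducible lam mu P) (hPpos : forall i j, 0 <= P i j)
  (hProw : forall i, \sum_j P i j <= 1).

Lemma jump_weight_ge0_eq0 (psi : 'I_d -> R) :
  (forall v, is_jump lam mu P v -> 0 <= jump_weight psi v) -> forall k, psi k = 0.
Proof.
(* Walk from [0] to [unitv k] and back. *)
move=> psi_ge0 k.
have path_ge0 s : (forall v, v \in s -> is_jump lam mu P v) ->
    0 <= jump_weight psi (\sum_(v <- s) v).
  move=> s_jumps; rewrite (big_morph _ (jump_weightD psi) (jump_weight0 psi)).
  by rewrite big_seq sumr_ge0 // => v /s_jumps /psi_ge0.
have [s [s_jumps to_k]] := hA 0 (unitv k).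
have [s' [s'_jumps from_k]] := hA (unitv k) 0.
move: (path_ge0 _ s_jumps) (path_ge0 _ s'_jumps).
move/(congr1 (jump_weight psi)): from_k.
move/(congr1 (jump_weight psi)): to_k.
rewrite add0r jump_weightD jump_weight_unitv jump_weight0; lra.
Qed.

(* The indicator of the set where [z] attains a negative minimum has
   nonnegative weight on every jump, hence vanishes by irreducibility. *)
Lemma superharmonic_ge0 (T : pred 'I_d) (z : 'I_d -> R) :
  (forall j, T j -> 0 <= z j) ->
  (forall k, ~~ T k -> \sum_j P k j * z j <= z k) -> forall k, 0 <= z k.
Proof.
move=> zT z_super k; rewrite leNgt; apply/negP => zk.
pose m := [arg min_(i < k) z i]%O.
have z_min i : z m <= z i by rewrite /m; case: arg_minP => // j _; apply.
have zm_lt0 : z m < 0 by apply: le_lt_trans (z_min k) zk.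
have at_min i : z i = z m ->
    p0 P i = 0 /\ forall j, P i j * (z j - z m) = 0.
  move=> zi; have nTi : ~~ T i by apply/negP => /zT; rewrite zi leNgt zm_lt0.
  have excess_ge0 j : 0 <= P i j * (z j - z m) by rewrite mulr_ge0 // subr_ge0.
  have row_le : z m <= (\sum_l P i l) * z m by move: (hProw i); nra.
  have exc_ge0 : 0 <= \sum_l P i l * (z l - z m) by exact: sumr_ge0.
  have super := z_super i nTi; rewrite zi in super.
  have row_split : \sum_l P i l * z l
      = (\sum_l P i l) * z m + \sum_l P i l * (z l - z m).
    by rewrite big_distrl -big_split; apply: eq_bigr => l _ /=; ring.
  rewrite row_split in super.
  split=> [|j]; last first.
    by apply: (@psumr_eq0P _ _ xpredT _ (fun l _ => excess_ge0 l)) => //; lra.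
  by apply: (mulIf (ltr0_neq0 zm_lt0)); rewrite mul0r /p0; lra.
pose psi i : R := (z i == z m)%:R.
suff : psi m = 0 by rewrite /psi eqxx; apply/eqP; rewrite oner_eq0.
apply: jump_weight_ge0_eq0 => v [[i [-> _]]|[[i [-> hi]]|[i [j [-> hij]]]]].
- by rewrite jump_weight_unitv ler0n.
- rewrite jump_weightN jump_weight_unitv oppr_ge0 /psi; case: eqP => // /at_min [p0i _].
  by move: hi; rewrite p0i mulr0 ltxx.
- rewrite jump_weightD jump_weightN !jump_weight_unitv subr_ge0 /psi.
  case: eqP => // /at_min [_ /(_ j) /eqP]; rewrite mulf_eq0 subr_eq0.
  case/orP => [/eqP Pij|/eqP ->]; last by rewrite eqxx.
  by move: hij; rewrite Pij mulr0 ltxx.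
Qed.

Lemma harmonic_eq0 (z : 'I_d -> R) :
  (forall k, \sum_j P k j * z j = z k) -> forall k, z k = 0.
Proof.
move=> z_harm k.
have harm_ge0 w : (forall l, \sum_j P l j * w j = w l) -> 0 <= w k.
  by move=> w_harm; apply: (@superharmonic_ge0 pred0) => // l _; rewrite w_harm.
apply/eqP; rewrite eq_le -oppr_ge0 harm_ge0 // andbT.
apply: (harm_ge0 (fun j => - z j)) => l.
by rewrite -(z_harm l) -sumrN; apply: eq_bigr => j _; rewrite mulrN.
Qed.

Lemma unitmx_IsubP : (1%:M - P) \in unitmx.
Proof.
rewrite unitmxE unitfE -det_tr; apply/negP => /det0P [v v_neq0 v_ker].
apply: (negP v_neq0); apply/eqP/matrixP => i j.
rewrite mxE ord1; apply: harmonic_eq0 => {}j.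
move/matrixP/(_ 0 j): v_ker; rewrite !mxE.
under eq_bigr do rewrite !mxE mulrBr.
rewrite sumrB (bigD1 j) //= big1 => [|l lj]; last by rewrite eq_sym (negbTE lj) mulr0.
rewrite eqxx mulr1 addr0 => /eqP; rewrite subr_eq0 => /eqP ->.
by apply: eq_bigr => l _; rewrite mulrC.
Qed.

Local Notation G := (Gmx P).

Lemma Gmx_fixl i j : G i j = (i == j)%:R + \sum_k P i k * G k j.
Proof.
move/matrixP/(_ i j): (mulmxV unitmx_IsubP).
by rewrite mulmxBl mul1mx !mxE => <-; rewrite subrK.
Qed.

Lemma Gmx_fixr i j : G i j = (i == j)%:R + \sum_k G i k * P k j.
Proof.
move/matrixP/(_ i j): (mulVmx unitmx_IsubP).
by rewrite mulmxBr mulmx1 !mxE => <-; rewrite subrK.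
Qed.

Lemma Gmx_ge0 i j : 0 <= G i j.
Proof.
apply: (@superharmonic_ge0 pred0 (fun k => G k j)) => // k _.
by rewrite [leRHS]Gmx_fixl lerDr ler0n.
Qed.

Lemma Gmx_diag_ge1 k : 1 <= G k k.
Proof.
by rewrite Gmx_fixl eqxx lerDl sumr_ge0 // => j _; rewrite mulr_ge0 ?Gmx_ge0.
Qed.

Lemma Gmx_le_diag j k : G j k <= G k k.
Proof.
rewrite -subr_ge0.
apply: (@superharmonic_ge0 (pred1 k) (fun j => G k k - G j k)).
  by move=> l /eqP ->; rewrite subrr.
move=> l /= /negbTE lk; rewrite [in leRHS](Gmx_fixl l k) lk add0r.
have -> : \sum_m P l m * (G k k - G m k) = (\sum_m P l m) * G k k - \sum_m P l m * G m k.
  by rewrite big_distrl -sumrB; apply: eq_bigr => m _; rewrite mulrBr.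
by rewrite lerD2r ler_piMl ?Gmx_ge0.
Qed.

Lemma Gmx_minor_fixl l k m : m != l ->
  G l l * G m k - G m l * G l k
  = (m == k)%:R * G l l + \sum_j P m j * (G l l * G j k - G j l * G l k).
Proof.
move=> /negbTE ml; rewrite (Gmx_fixl m k) (Gmx_fixl m l) ml add0r.
rewrite mulrDr big_distrr big_distrl -addrA -sumrB /= mulrC.
by congr (_ + _); apply: eq_bigr => j _; ring.
Qed.

Lemma Gmx_minor_ge0 l j k : G j l * G l k <= G l l * G j k.
Proof.
rewrite -subr_ge0.
apply: (@superharmonic_ge0 (pred1 l) (fun j => G l l * G j k - G j l * G l k)).
  by move=> m /eqP ->; rewrite subrr.
by move=> m ml; rewrite [leRHS]Gmx_minor_fixl // lerDr mulr_ge0 ?ler0n ?Gmx_ge0.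
Qed.

Lemma Gmx_minor_ge_diag l k : k != l -> G l l <= G l l * G k k - G k l * G l k.
Proof.
move=> kl; rewrite Gmx_minor_fixl // eqxx mul1r lerDl.
by apply: sumr_ge0 => j _; rewrite mulr_ge0 // subr_ge0 Gmx_minor_ge0.
Qed.

Variable nu : 'I_d -> R.
Hypotheses (hnu : forall j, nu j = lam j + \sum_i nu i * P i j)
  (hlam : forall i, 0 <= lam i).

Lemma nu_Gmx k : nu k = \sum_j lam j * G j k.
Proof.
have lamE j : lam j = nu j - \sum_i nu i * P i j by rewrite [nu j]hnu addrK.
under eq_bigr do rewrite lamE mulrBl big_distrl /=.
rewrite sumrB exchange_big /=.
under [X in _ - X]eq_bigr do under eq_bigr do rewrite -mulrA.
rewrite -sumrB.
under eq_bigr => i _ do rewrite -big_distrr -mulrBr {1}(Gmx_fixl i k) addrK.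
rewrite (bigD1 k) //= eqxx mulr1 big1 ?addr0 // => i /negbTE ->.
by rewrite mulr0.
Qed.

Lemma Gmx_nu_le k l : G k l * nu k <= G k k * nu l.
Proof.
rewrite !nu_Gmx !big_distrr; apply: ler_sum => j _ /=.
by rewrite mulrCA [G k k * _]mulrCA ler_wpM2l // mulrC Gmx_minor_ge0.
Qed.

(* If [nu k = 0] then [G i k = 0] on every arrival queue [i], and the
   indicator of [G _ k > 0] has nonpositive weight on every jump. *)
Lemma nu_gt0 k : 0 < nu k.
Proof.
have Gkk_gt0 := lt_le_trans ltr01 (Gmx_diag_ge1 k).
rewrite lt_neqAle eq_sym nu_Gmx sumr_ge0 ?andbT => [|j _]; last first.
  by rewrite mulr_ge0 ?Gmx_ge0.
apply/negP => /eqP/(psumr_eq0P (fun j _ => mulr_ge0 (hlam j) (Gmx_ge0 j k))) lamG0.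
pose psi j : R := - ((0 < G j k)%R : nat)%:R.
suff : psi k = 0 by rewrite /psi Gkk_gt0 => /eqP; rewrite oppr_eq0 oner_eq0.
apply: jump_weight_ge0_eq0 => v [[i [-> lam_i]]|[[i [-> _]]|[i [j [-> hij]]]]].
- rewrite jump_weight_unitv /psi oppr_ge0.
  by move/eqP: (lamG0 i isT); rewrite mulf_eq0 gt_eqF //= => /eqP ->; rewrite ltxx.
- by rewrite jump_weightN jump_weight_unitv opprK ler0n.
- rewrite jump_weightD jump_weightN !jump_weight_unitv /psi opprK addrC subr_ge0.
  case: (ltP 0 (G i k)) => [_|Gik]; first by rewrite ler_nat leq_b1.
  have Pij : 0 < P i j.
    by rewrite lt_def hPpos andbT; apply: contraTneq hij => ->; rewrite mulr0 ltxx.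
  have ik : i != k by apply: contraTneq Gik => ->; rewrite -ltNge.
  have : P i j * G j k <= 0.
    apply: le_trans Gik; rewrite (Gmx_fixl i k) (negbTE ik) add0r (bigD1 j) //=.
    by rewrite lerDl sumr_ge0 // => l _; rewrite mulr_ge0 ?Gmx_ge0.
  by rewrite pmulr_rle0 // leNgt => /negbTE ->.
Qed.

End IrreducibleKernel.

Section ExpFlow.
Variables (R : realType) (d : nat).
Variables (w : 'I_d -> 'I_d -> R) (u v : 'I_d -> R).
Hypothesis flow : forall m, \sum_i w i m + v m = \sum_j w m j + u m.

Lemma balanced_flow_sum0 (delta : 'I_d -> R) :
  \sum_i \sum_j w i j * (delta j - delta i)
    + \sum_i u i * (- delta i) + \sum_i v i * delta i = 0.
Proof.
have inflow : \sum_i \sum_j w i j * delta j = \sum_m delta m * \sum_i w i m.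
  rewrite exchange_big; apply: eq_bigr => m _.
  by rewrite big_distrr; apply: eq_bigr => i _; rewrite mulrC.
have outflow : \sum_i \sum_j w i j * delta i = \sum_m delta m * \sum_j w m j.
  by apply: eq_bigr => m _; rewrite big_distrr; apply: eq_bigr => j _; rewrite mulrC.
have -> : \sum_i \sum_j w i j * (delta j - delta i)
    = \sum_i \sum_j w i j * delta j - \sum_i \sum_j w i j * delta i.
  rewrite -sumrB; apply: eq_bigr => i _.
  by rewrite -sumrB; apply: eq_bigr => j _; rewrite mulrBr.
rewrite inflow outflow -sumrB -!big_split big1 // => m _ /=.
transitivity (delta m * ((\sum_i w i m + v m) - (\sum_j w m j + u m))); first by ring.
by rewrite flow subrr mulr0.
Qed.

Hypotheses (w_ge0 : forall i j, 0 <= w i j) (u_ge0 : forall i, 0 <= u i)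
  (v_ge0 : forall i, 0 <= v i).

Definition expflow (delta : 'I_d -> R) : R :=
  \sum_i \sum_j w i j * expR (delta j - delta i)
  + \sum_i u i * expR (- delta i) + \sum_i v i * expR (delta i).

Lemma expflow_min (delta : 'I_d -> R) : expflow (fun=> 0) <= expflow delta.
Proof.
rewrite -subr_ge0.
have -> : expflow delta - expflow (fun=> 0)
    = \sum_i \sum_j w i j * (expR (delta j - delta i) - 1)
      + \sum_i u i * (expR (- delta i) - 1) + \sum_i v i * (expR (delta i) - 1).
  have sub1 (c F : 'I_d -> R) :
      \sum_i c i * (F i - 1) = \sum_i c i * F i - \sum_i c i * 1.
    by rewrite -sumrB; apply: eq_bigr => i _; rewrite mulrBr.
  rewrite (eq_bigr _ (fun i _ => sub1 (w i) (fun j => expR (delta j - delta i)))).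
  by rewrite sumrB !sub1 /expflow subrr oppr0 expR0; ring.
rewrite -[leLHS](balanced_flow_sum0 delta); apply: lerD; first apply: lerD.
- apply: ler_sum => i _; apply: ler_sum => j _; apply: ler_wpM2l => //.
  by rewrite lerBrDl expR_ge1Dx.
- by apply: ler_sum => i _; apply: ler_wpM2l => //; rewrite lerBrDl expR_ge1Dx.
- by apply: ler_sum => i _; apply: ler_wpM2l => //; rewrite lerBrDl expR_ge1Dx.
Qed.

End ExpFlow.

Section Lagrangian.
Variables (R : realType) (d : nat) (lam : 'I_d -> R) (P : 'M[R]_d).

Definition Bdefect (a : 'I_d -> R) (i : 'I_d) : R :=
  \sum_j P i j * expR (a j - a i) + p0 P i * expR (- a i) - 1.

(* [Rfun lam mu P] unfolds to [Lagr mu]. *)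
Definition Lagr (c a : 'I_d -> R) : R :=
  \sum_i c i * Bdefect a i + \sum_i lam i * (expR (a i) - 1).

Lemma Lagr_split mu c a :
  Lagr mu a = Lagr c a + \sum_i (mu i - c i) * Bdefect a i.
Proof.
rewrite /Lagr addrAC; congr (_ + _); rewrite -big_split; apply: eq_bigr => i _ /=.
by rewrite -mulrDl addrC subrK.
Qed.

Lemma BdefectE a i :
  Bdefect a i = (\sum_j P i j * expR (a j) + p0 P i - expR (a i)) / expR (a i).
Proof.
have ea_neq0 : expR (a i) != 0 by rewrite gt_eqF // expR_gt0.
rewrite /Bdefect expRN; under eq_bigr do rewrite expRB mulrA.
by rewrite -mulr_suml; field.
Qed.

Lemma Bdefect_ge0 a k :
  expR (a k) <= \sum_j P k j * expR (a j) + p0 P k -> 0 <= Bdefect a k.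
Proof. by move=> Bk; rewrite BdefectE divr_ge0 ?subr_ge0 // ltW ?expR_gt0. Qed.

Lemma Bdefect_gt0 a k :
  expR (a k) <= \sum_j P k j * expR (a j) + p0 P k -> ~ Jset P a k ->
  0 < Bdefect a k.
Proof.
move=> Bk nJk; rewrite BdefectE divr_gt0 ?expR_gt0 // subr_gt0 lt_def Bk andbT.
by apply/eqP => Jk; apply: nJk; rewrite /Jset Jk.
Qed.

Lemma Bdefect_eq0 a k : Jset P a k -> Bdefect a k = 0.
Proof. by rewrite BdefectE /Jset => <-; rewrite subrr mul0r. Qed.

Lemma Jset_ln (x : 'I_d -> R) k : (forall i, 0 < x i) ->
  x k = \sum_j P k j * x j + p0 P k -> Jset P (fun i => ln (x i)) k.
Proof.
move=> x_gt0 xk; have lnxK i : expR (ln (x i)) = x i by apply/eqP; rewrite lnK_eq.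
by rewrite /Jset lnxK; under eq_bigr do rewrite lnxK.
Qed.

(* [ln x] is a stationary point of [Lagr (x * y)]. *)
Definition balanced (x y : 'I_d -> R) : Prop := forall m,
  x m * (\sum_i y i * P i m + lam m) = y m * (\sum_j P m j * x j + p0 P m).

Lemma Lagr_expflow (x y a : 'I_d -> R) : (forall i, 0 < x i) ->
  Lagr (fun i => x i * y i) a =
  expflow (fun i j => y i * P i j * x j) (fun i => y i * p0 P i)
    (fun i => lam i * x i) (fun i => a i - ln (x i))
  - \sum_i x i * y i - \sum_i lam i.
Proof.
move=> x_gt0; have x_neq0 i : x i != 0 by rewrite gt_eqF.
have expRBln i : expR (a i - ln (x i)) = expR (a i) / x i.
  by rewrite expRB; congr (_ / _); apply/eqP; rewrite lnK_eq.
have ea_neq0 i : expR (a i) != 0 by rewrite gt_eqF // expR_gt0.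
have service i : x i * y i * Bdefect a i =
    \sum_j y i * P i j * x j * expR ((a j - ln (x j)) - (a i - ln (x i)))
    + y i * p0 P i * expR (- (a i - ln (x i))) - x i * y i.
  under eq_bigr do rewrite expRB !expRBln.
  rewrite expRN expRBln BdefectE.
  have -> : \sum_j y i * P i j * x j * (expR (a j) / x j / (expR (a i) / x i))
      = x i * y i / expR (a i) * \sum_j P i j * expR (a j).
    by rewrite mulr_sumr; apply: eq_bigr => j _; field; rewrite !x_neq0 ea_neq0.
  by field; rewrite !x_neq0 ea_neq0.
have arrival i : lam i * (expR (a i) - 1) = lam i * x i * expR (a i - ln (x i)) - lam i.
  by rewrite expRBln; field.
rewrite /Lagr /expflow (eq_bigr _ (fun i _ => service i)).
rewrite (eq_bigr _ (fun i _ => arrival i)) sumrB big_split sumrB /=; ring.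
Qed.

Hypotheses (hlam : forall i, 0 <= lam i) (hPpos : forall i j, 0 <= P i j)
  (hProw : forall i, \sum_j P i j <= 1).

Lemma Lagr_ln_min (x y a : 'I_d -> R) :
  (forall i, 0 < x i) -> (forall i, 0 <= y i) -> balanced x y ->
  Lagr (fun i => x i * y i) (fun i => ln (x i)) <= Lagr (fun i => x i * y i) a.
Proof.
move=> x_gt0 y_ge0 bal; rewrite !Lagr_expflow //.
rewrite (_ : (fun i => ln (x i) - ln (x i)) = fun=> 0); last first.
  by apply: funext => i; rewrite subrr.
rewrite !lerD2r; apply: expflow_min => [m|i j|i|i].
- transitivity (x m * (\sum_i y i * P i m + lam m)).
    by rewrite mulrDr mulr_sumr mulrC; congr (_ + _); apply: eq_bigr => i _; ring.
  by rewrite bal mulrDr mulr_sumr; congr (_ + _); apply: eq_bigr => j _; ring.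
- by rewrite !mulr_ge0 // ltW.
- by rewrite mulr_ge0 // subr_ge0.
- by rewrite mulr_ge0 // ltW.
Qed.

Lemma Rfun_ln_lt mu (x y a : 'I_d -> R) i :
  (forall i, 0 < x i) -> (forall i, 0 <= y i) -> balanced x y ->
  (forall k, x k * y k = mu k \/
    [/\ x k * y k < mu k, 0 <= Bdefect a k & Bdefect (fun i => ln (x i)) k = 0]) ->
  x i * y i < mu i -> 0 < Bdefect a i ->
  Rfun lam mu P (fun i => ln (x i)) < Rfun lam mu P a.
Proof.
move=> x_gt0 y_ge0 bal slack xyi Bai.
change (Lagr mu (fun i => ln (x i)) < Lagr mu a).
rewrite !(Lagr_split mu (fun i => x i * y i)).
rewrite big1 ?addr0 => [|k _]; last first.
  by case: (slack k) => [->|[_ _ ->]]; rewrite ?subrr ?mul0r ?mulr0.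
apply: le_lt_trans (Lagr_ln_min a x_gt0 y_ge0 bal) _; rewrite ltrDl (bigD1 i) //=.
apply: ltr_pwDl; first by rewrite mulr_gt0 // subr_gt0.
apply: sumr_ge0 => k _.
case: (slack k) => [->|[xyk Bak _]]; first by rewrite subrr mul0r.
by rewrite mulr_ge0 // subr_ge0 ltW.
Qed.

End Lagrangian.

Lemma sqr_addr_le4M (R : realDomainType) (p q X Y : R) : 0 <= p -> 0 <= q ->
  p <= X -> p <= Y -> q <= X -> q <= Y -> (p + q) ^+ 2 <= 4 * (X * Y).
Proof. nra. Qed.

(* With [g = G_11], [h = G_kk], [a = G_k1], [b = G_1k], [s0 ^+ 2 = nu_1],
   [sk ^+ 2 = nu_k] and [sk + D = sqrt mu_k], the left-hand side of the
   conclusion is [x_t k * y_t k]. *)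
Lemma shifted_product_lt (R : realDomainType) (g h a b t s0 sk D : R) :
  0 < g -> 0 <= a <= g -> 0 <= b <= h -> g <= h * g - a * b ->
  a * sk ^+ 2 <= h * s0 ^+ 2 -> b * s0 ^+ 2 <= g * sk ^+ 2 ->
  0 <= t -> 0 <= sk -> 0 < D -> h * g * s0 ^+ 2 * t ^+ 2 <= D ^+ 2 ->
  (1 + t * a) * (sk ^+ 2 + s0 ^+ 2 * t * b) < (sk + D) ^+ 2.
Proof.
move=> g_gt0 /andP[a_ge0 ag] /andP[b_ge0 bh] abgh ask bsk t_ge0 sk_ge0 D_gt0 hD.
have h_ge0 : 0 <= h by apply: le_trans bh.
have cross_sq : (a * sk ^+ 2 + b * s0 ^+ 2) ^+ 2 <= 4 * (g * sk ^+ 2 * (h * s0 ^+ 2)).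
  have := sqr_ge0 sk; have := sqr_ge0 s0 => s02 sk2.
  by apply: sqr_addr_le4M => //;
    [exact: mulr_ge0 | exact: mulr_ge0 | rewrite ler_wpM2r | rewrite ler_wpM2r].
have cross : t * (a * sk ^+ 2 + b * s0 ^+ 2) <= 2 * sk * D.
  have pq_ge0 : 0 <= a * sk ^+ 2 + b * s0 ^+ 2.
    by rewrite addr_ge0 // mulr_ge0 ?sqr_ge0.
  rewrite -(ler_pXn2r (n := 2)) ?nnegrE ?mulr_ge0 ?(ltW D_gt0) //.
  have := ler_wpM2l (sqr_ge0 t) cross_sq; have := ler_wpM2l (sqr_ge0 sk) hD.
  rewrite !exprMn; nra.
have quad : t ^+ 2 * a * b * s0 ^+ 2 < D ^+ 2.
  have -> : t ^+ 2 * a * b * s0 ^+ 2 = (t * s0) ^+ 2 * (a * b) by ring.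
  have [->|ts0] := eqVneq (t * s0) 0; first by rewrite expr0n /= mul0r exprn_gt0.
  apply: lt_le_trans hD.
  have ts0_gt0 : 0 < (t * s0) ^+ 2 by rewrite lt_def sqrf_eq0 ts0 sqr_ge0.
  have -> : h * g * s0 ^+ 2 * t ^+ 2 = (t * s0) ^+ 2 * (h * g) by ring.
  by rewrite ltr_pM2l //; lra.
nra.
Qed.

Section Perturbation.
Variables (R : realType) (n : nat) (lam mu nu : 'I_n.+1 -> R) (P : 'M[R]_n.+1).
Hypotheses (hlam : forall i, 0 <= lam i) (hmu : forall i, 0 < mu i)
  (hPpos : forall i j, 0 <= P i j) (hProw : forall i, \sum_j P i j <= 1)
  (hA : jackson_irreducible lam mu P)
  (hnu : forall j, nu j = lam j + \sum_i nu i * P i j)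
  (hB : forall i, nu i < mu i).

(* Queue 1 of the paper. *)
Local Notation o := (ord0 : 'I_n.+1).
Local Notation G := (Gmx P).

Let G_ge0 := Gmx_ge0 hA hPpos hProw.
Let Gdiag_gt0 k : 0 < G k k := lt_le_trans ltr01 (Gmx_diag_ge1 hA hPpos hProw k).
Let nu_pos := nu_gt0 hA hPpos hProw hnu hlam.

Definition xt (t : R) k := 1 + t * G k o.
Definition yt (t : R) k := nu k + nu o * t * G o k.

Lemma xt_mean t m : \sum_j P m j * xt t j + p0 P m = xt t m - t * (m == o)%:R.
Proof.
have -> : \sum_j P m j * xt t j = \sum_j P m j + t * \sum_j P m j * G j o.
  by rewrite mulr_sumr -big_split; apply: eq_bigr => j _ /=; rewrite /xt; ring.
by rewrite /xt (Gmx_fixl hA hPpos hProw m o) /p0; ring.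
Qed.

Lemma yt_inflow t m : \sum_i yt t i * P i m + lam m = yt t m - nu o * t * (o == m)%:R.
Proof.
have -> : \sum_i yt t i * P i m = \sum_i nu i * P i m + nu o * t * \sum_i G o i * P i m.
  by rewrite mulr_sumr -big_split; apply: eq_bigr => i _ /=; rewrite /yt; ring.
by rewrite /yt (Gmx_fixr hA hPpos hProw o m) [nu m]hnu; ring.
Qed.

Lemma balanced_xt_yt t : balanced lam P (xt t) (yt t).
Proof.
move=> m; rewrite yt_inflow xt_mean.
have [->|_] := eqVneq m o; last by rewrite !mulr0 !subr0 mulrC.
by rewrite /xt /yt; ring.
Qed.

Lemma xt_gt0 t k : 0 <= t -> 0 < xt t k.
Proof.
by move=> t_ge0; rewrite /xt ltr_pwDl // mulr_ge0 // G_ge0.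
Qed.

Lemma yt_ge0 t k : 0 <= t -> 0 <= yt t k.
Proof.
move=> t_ge0; have nu_ge0 j := ltW (nu_pos j).
by rewrite /yt addr_ge0 ?mulr_ge0 ?G_ge0.
Qed.

Lemma Jset_xt t k : 0 <= t -> k != o -> Jset P (fun j => ln (xt t j)) k.
Proof.
move=> t_ge0 /negbTE ko; apply: Jset_ln => [j|]; first exact: xt_gt0.
by rewrite xt_mean ko mulr0 subr0.
Qed.

Lemma Jset_xt0 k : Jset P (fun j => ln (xt 0 j)) k.
Proof.
apply: Jset_ln => [j|]; first exact: xt_gt0.
by rewrite xt_mean mul0r subr0.
Qed.

Definition tmax : R := (Num.sqrt (mu o) - Num.sqrt (nu o)) / (Num.sqrt (nu o) * G o o).

Lemma tmax_ge0 : 0 <= tmax.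
Proof.
rewrite /tmax divr_ge0 ?mulr_ge0 ?sqrtr_ge0 ?G_ge0 // subr_ge0.
by rewrite ler_sqrt ?ltW.
Qed.

Lemma gap_tmax : gap mu nu P o = G o o * nu o * tmax ^+ 2.
Proof.
rewrite /gap /tmax; set s : R := Num.sqrt (nu o).
have s_gt0 : 0 < s by rewrite sqrtr_gt0.
have -> : nu o = s ^+ 2 by rewrite sqr_sqrtr // ltW.
by field; rewrite !gt_eqF.
Qed.

Lemma xt_yt_tmax : xt tmax o * yt tmax o = mu o.
Proof.
rewrite /xt /yt /tmax; set s : R := Num.sqrt (nu o); set m : R := Num.sqrt (mu o).
have s_gt0 : 0 < s by rewrite sqrtr_gt0.
have -> : mu o = m ^+ 2 by rewrite sqr_sqrtr // ltW.
have -> : nu o = s ^+ 2 by rewrite sqr_sqrtr // ltW.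
by field; rewrite !gt_eqF.
Qed.

Hypothesis hmin : forall i, gap mu nu P o <= gap mu nu P i.

Lemma xt_yt_lt t k : k != o -> 0 <= t <= tmax -> xt t k * yt t k < mu k.
Proof.
move=> ko /andP[t_ge0 t_le].
have nu_ge0 j := ltW (nu_pos j).
have G_le_diag := Gmx_le_diag hA hPpos hProw.
have G_nu_le := Gmx_nu_le hA hPpos hProw hnu hlam.
set s : R := Num.sqrt (nu o).
set sk : R := Num.sqrt (nu k); set D : R := Num.sqrt (mu k) - sk.
have nuk : nu k = sk ^+ 2 by rewrite sqr_sqrtr.
have nuo : nu o = s ^+ 2 by rewrite sqr_sqrtr.
have muk : mu k = (sk + D) ^+ 2 by rewrite addrC subrK sqr_sqrtr // ltW.
have D_gt0 : 0 < D by rewrite subr_gt0 ltr_sqrt.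
rewrite /xt /yt nuk nuo muk; apply: (@shifted_product_lt _ (G o o) (G k k)) => //.
- by rewrite G_ge0 G_le_diag.
- by rewrite G_ge0 G_le_diag.
- by rewrite [G k k * _]mulrC (Gmx_minor_ge_diag hA hPpos hProw).
- by rewrite -nuk -nuo G_nu_le.
- by rewrite -nuk -nuo G_nu_le.
- exact: sqrtr_ge0.
have := hmin k; rewrite gap_tmax /gap -/sk -/D ler_pdivlMr ?Gdiag_gt0 // nuo.
apply: le_trans.
have hgs_ge0 := mulr_ge0 (mulr_ge0 (G_ge0 k k) (G_ge0 o o)) (sqr_ge0 s).
have t2 : t ^+ 2 <= tmax ^+ 2 by rewrite ler_pXn2r ?nnegrE // (le_trans t_ge0).
have := ler_wpM2l hgs_ge0 t2; nra.
Qed.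

Lemma Rfun_xt_lt t a i : Bset P o a -> i != o -> ~ Jset P a i -> 0 <= t <= tmax ->
  xt t o * yt t o = mu o \/ (Jset P a o /\ t = 0) ->
  Rfun lam mu P (fun k => ln (xt t k)) < Rfun lam mu P a.
Proof.
move=> Ba io nJi t_range at_o; have /andP[t_ge0 _] := t_range.
apply: (Rfun_ln_lt hlam hPpos hProw) (xt_yt_lt io t_range) _ => //.
- by move=> k; apply: xt_gt0.
- by move=> k; apply: yt_ge0.
- exact: balanced_xt_yt.
- move=> k; have [->|ko] := eqVneq k o; last first.
    right; split; [exact: xt_yt_lt | exact: Bdefect_ge0 (Ba k ko)
                  | exact: Bdefect_eq0 (Jset_xt t_ge0 ko)].
  case: at_o => [|[Jo t0]]; [by left | right; subst t].
  split; [by rewrite /xt /yt !(mul0r, mulr0, addr0) mul1r hB | by rewrite Bdefect_eq0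
         | exact: Bdefect_eq0 (Jset_xt0 o)].
- by move/Bdefect_gt0: (Ba i io); apply.
Qed.

End Perturbation.

Theorem lemma8p1 (R : realType) (n : nat) (lam mu nu : 'I_n.+1 -> R)
  (P : 'M[R]_n.+1)
  (hlam : forall i, 0 <= lam i) (hmu : forall i, 0 < mu i)
  (hPpos : forall i j, 0 <= P i j) (hPdiag : forall i, P i i = 0)
  (hProw : forall i, \sum_j P i j <= 1)
  (hA : jackson_irreducible lam mu P)
  (hnu : forall j, nu j = lam j + \sum_i nu i * P i j)
  (hB : forall i, nu i < mu i)
  (hmin : forall i, gap mu nu P ord0 <= gap mu nu P i)
  (a : 'I_n.+1 -> R) (ha : Bset P ord0 a) :
  forall i : 'I_n.+1, i != ord0 -> ~ Jset P a i ->
    exists a' : 'I_n.+1 -> R,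
      [/\ Bset P ord0 a',
          (forall k, Jset P a k \/ k = i -> Jset P a' k) &
          Rfun lam mu P a' < Num.max (Rfun lam mu P a) (- gap mu nu P i)].
Proof.
move=> i io nJi.
have descent := Rfun_xt_lt hlam hmu hPpos hProw hA hnu hB hmin ha io nJi.
have tmax_ge0 := tmax_ge0 hmu hPpos hProw hA hB.
have [Jo|nJo] := eqVneq (expR (a ord0)) (\sum_j P ord0 j * expR (a j) + p0 P ord0).
  have Jxt := Jset_xt0 hPpos hProw hA.
  exists (fun k => ln (xt P 0 k)); split=> [k _|k _|]; first by rewrite [leLHS]Jxt.
    exact: Jxt.
  by rewrite lt_max; apply/orP; left; apply: descent; rewrite ?lexx ?tmax_ge0 //; right.
have Jxt k := Jset_xt hPpos hProw hA (t := tmax mu nu P) (k := k) tmax_ge0.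
exists (fun k => ln (xt P (tmax mu nu P) k)); split=> [k ko|k Jk|].
- by rewrite [leLHS](Jxt k ko).
- apply: Jxt; case: Jk => [Jk|->] //; apply: contraNneq nJo => ko.
  by rewrite -ko Jk.
- rewrite lt_max; apply/orP; left; apply: descent; first by rewrite tmax_ge0 lexx.
  by left; exact: xt_yt_tmax.
Qed.
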